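(* Let $\mathbb{Z}_4$ be the semiring of integers modulo $4$. Let $A=\{a_0,a_1,a_2,a_3,b_0,b_1,b_2,b_3,c_0,c_1\}$ (ten distinct elements). Let $\mathbb{X}\colon\mathrm{As}(\{x,y,z\},A)\to\mathbb{Z}_4$ map each of the eight assignments $(x,y,z)\mapsto(a_0,b_0,c_0),(a_0,b_1,c_0),(a_1,b_0,c_1),(a_1,b_1,c_1),(a_2,b_2,c_0),(a_2,b_3,c_0),(a_3,b_2,c_1),(a_3,b_3,c_1)$ to $1$, and every other assignment to $0$. Then $\mathbb{X}$ satisfies the pure independence atoms $x\perp y$ and $xy\perp z$, but does not satisfy $x\perp yz$. Consequently the mixing rule (from $x\perp y$ and $xy\perp z$ infer $x\perp yz$) is not sound for $\mathbb{Z}_4$-teams.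
   Context: For a commutative semiring $K$, a $K$-team is a function $\mathbb{X}\colon\mathrm{As}(V,A)\to K$, where $\mathrm{As}(V,A)$ is the set of assignments $V\to A$. With $V=\{x_1<\dots<x_k\}$ and $\vec a_s=(s(x_1),\dots,s(x_k))$, let $\pi_{\mathbb{X}}$ map the fact $R(\vec a_s)$ ($R$ of arity $k$) to $\mathbb{X}(s)$. For variable tuples $\vec x,\vec y$ from $V$ with index tuples $\vec j,\vec k$, the pure independence atom $\vec x\perp\vec y$ has value $[\![\phi^{(),\vec j,\vec k}_{\rm indep}]\!]_{\pi_{\mathbb{X}}}$, where $$\phi^{(),\vec j,\vec k}_{\rm indep}=\forall\vec v\vec w\big((\theta_{\vec j}(\vec v)\wedge\theta_{\vec k}(\vec w))=(\theta_{()}\wedge\theta_{\vec j,\vec k}(\vec v,\vec w))\big)$$ and $\theta_{\vec i_1,\dots,\vec i_n}(\vec u_1,\dots,\vec u_n)=\exists\vec x'(R(\vec x')\wedge\vec x'_{\vec i_1}=\vec u_1\wedge\dots\wedge\vec x'_{\vec i_n}=\vec u_n)$. Conjunction is interpreted as product, $\exists$ as sum over $A$, $\forall$ as product over $A$, equality literals as $1/0$, and a formula equality as $1$ if both sides have equal value in $K$, and $0$ otherwise. Unfolded, $\mathbb{X}$ satisfies $\vec x\perp\vec y$ (value $\neq0$) iff for all tuples $\vec a,\vec b$ over $A$: $$\Big(\sum_{s:\,s(\vec x)=\vec a}\mathbb{X}(s)\Big)\cdot\Big(\sum_{s:\,s(\vec y)=\vec b}\mathbb{X}(s)\Big)=\Big(\sum_s\mathbb{X}(s)\Big)\cdot\Big(\sum_{s:\,s(\vec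 x)=\vec a,\,s(\vec y)=\vec b}\mathbb{X}(s)\Big)$$ in $K$. Here $xy\perp z$ has $\vec x=(x,y)$, $\vec y=(z)$, and $x\perp yz$ has $\vec x=(x)$, $\vec y=(y,z)$. *)

From HB Require Import structures.
From mathcomp Require Import all_boot all_algebra.
Set Implicit Arguments. Unset Strict Implicit. Unset Printing Implicit Defensive.
Import GRing.Theory.
Local Open Scope ring_scope.

Definition assignment (V A : finType) := {ffun V -> A}.
Definition team (K : comPzSemiRingType) (V A : finType) := assignment V A -> K.

Section Indep.
Variables (K : comPzSemiRingType) (V A : finType) (X : team K V A).

Definition eqlit (a b : A) : K := if a == b then 1 else 0.

(* theta_{()} = exists x' R(x') *)
Definition theta0 : K := \sum_(s : assignment V A) X s.

(* theta_{j}(v) = exists x' (R(x') /\ x'_j = v); facts R(a_s) correspond to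
   assignments s, so the sum over A^k weighted by R is a sum over assignments *)
Definition theta1 (n : nat) (xs : 'I_n -> V) (v : {ffun 'I_n -> A}) : K :=
  \sum_(s : assignment V A) (X s * \prod_(i < n) eqlit (s (xs i)) (v i)).

Definition theta2 (n m : nat) (xs : 'I_n -> V) (ys : 'I_m -> V)
    (v : {ffun 'I_n -> A}) (w : {ffun 'I_m -> A}) : K :=
  \sum_(s : assignment V A)
     (X s * (\prod_(i < n) eqlit (s (xs i)) (v i))
          * (\prod_(i < m) eqlit (s (ys i)) (w i))).

(* value of phi_indep: forall v w ((theta_j(v) /\ theta_k(w)) = (theta_() /\ theta_{j,k}(v,w))) *)
Definition indep_value (n m : nat) (xs : 'I_n -> V) (ys : 'I_m -> V) : K :=
  \prod_(v : {ffun 'I_n -> A}) \prod_(w : {ffun 'I_m -> A})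
     (if theta1 xs v * theta1 ys w == theta0 * theta2 xs ys v w then 1 else 0).

Definition satisfies_indep (n m : nat) (xs : 'I_n -> V) (ys : 'I_m -> V) : Prop :=
  indep_value xs ys != 0.
End Indep.

Definition Var := 'I_3.
Definition vx : Var := inord 0.
Definition vy : Var := inord 1.
Definition vz : Var := inord 2.
Definition Dom := 'I_10.
Definition a_ (i : nat) : Dom := inord i.
Definition b_ (i : nat) : Dom := inord (4 + i).
Definition c_ (i : nat) : Dom := inord (8 + i).

Definition tup1 (u : Var) : 'I_1 -> Var := fun _ => u.
Definition tup2 (u w : Var) : 'I_2 -> Var := fun i => if val i == 0%N then u else w.

Definition support : seq (Dom * Dom * Dom) :=
  [:: (a_ 0, b_ 0, c_ 0); (a_ 0, b_ 1, c_ 0); (a_ 1, b_ 0, c_ 1); (a_ 1, b_ 1, c_ 1);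
      (a_ 2, b_ 2, c_ 0); (a_ 2, b_ 3, c_ 0); (a_ 3, b_ 2, c_ 1); (a_ 3, b_ 3, c_ 1)].

Definition Xteam : team 'Z_4 Var Dom :=
  fun s => if (s vx, s vy, s vz) \in support then 1 else 0.

From Pilot Require Import Defs.
From mathcomp Require Import all_boot all_algebra.
Set Implicit Arguments. Unset Strict Implicit. Unset Printing Implicit Defensive.
Import GRing.Theory.
Local Open Scope ring_scope.

(* Over a nontrivial semiring, X satisfies xs ⊥ ys exactly when
   theta_xs(v) * theta_ys(w) = theta_() * theta_{xs,ys}(v,w) for all v, w.
   The team Xteam has total weight theta_() = 8 = 0 in Z_4, so the atom
   reduces to: every product of marginals theta_xs(v) * theta_ys(w) vanishes.
   Marginals of Xteam are counts of rows of its support (a list of 8 triples):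
   - every value occurs an even number of times in the x- and y-columns, so the
     x/y products are multiples of 4;
   - every value occurs a multiple of 4 times in the z-column;
   - but the x-marginal at a_0 is 2 and the yz-marginal at (b_0, c_0) is 1,
     and 2 * 1 <> 0 in Z_4. *)

Lemma prod_indicator (R : comPzSemiRingType) (I : finType) (P : pred I) :
  \prod_(i : I) (if P i then 1 else 0) = (if [forall i, P i] then 1 else 0) :> R.
Proof.
case: (boolP [forall i, P i]) => [/forallP allP | /forallPn [i notPi]].
  by apply: big1 => i _; rewrite allP.
by rewrite (bigD1 i) //= (negbTE notPi) mul0r.
Qed.

Lemma indep_valueE (K : comPzSemiRingType) (V A : finType) (X : team K V A)
    (n m : nat) (xs : 'I_n -> V) (ys : 'I_m -> V) :
  indep_value X xs ys =
  if [forall v, forall w, theta1 X xs v * theta1 X ys w == theta0 X * theta2 X xs ys v w]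
  then 1 else 0.
Proof.
rewrite /indep_value -prod_indicator; apply: eq_bigr => v _.
by rewrite prod_indicator.
Qed.

Lemma satisfies_indepP (K : comNzSemiRingType) (V A : finType) (X : team K V A)
    (n m : nat) (xs : 'I_n -> V) (ys : 'I_m -> V) :
  satisfies_indep X xs ys <->
  (forall v w, theta1 X xs v * theta1 X ys w = theta0 X * theta2 X xs ys v w).
Proof.
rewrite /satisfies_indep indep_valueE.
case: (boolP [forall v, _]) => [/forallP all_eq | /forallPn [v /forallPn [w /eqP neq]]].
  by rewrite oner_neq0; split=> // _ v w; apply/eqP/(forallP (all_eq v)).
by rewrite eqxx; split=> // /(_ v w).
Qed.

Lemma satisfies_indep_null (K : comNzSemiRingType) (V A : finType) (X : team K V A)
    (n m : nat) (xs : 'I_n -> V) (ys : 'I_m -> V) :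
  theta0 X = 0 ->
  satisfies_indep X xs ys <-> (forall v w, theta1 X xs v * theta1 X ys w = 0).
Proof.
move=> X0; split=> [/satisfies_indepP indep v w | null_prod].
  by rewrite indep X0 mul0r.
by apply/satisfies_indepP => v w; rewrite null_prod X0 mul0r.
Qed.

Lemma Zp_nat_eq0 (p k : nat) : (1 < p)%N -> ((k%:R : 'Z_p) = 0 <-> (p %| k)%N).
Proof.
move=> p_gt1; rewrite /dvdn -(val_Zp_nat p_gt1); split=> [-> // | /eqP mod_eq0].
by apply: val_inj.
Qed.

Lemma sum_indicator (R : pzSemiRingType) (T : Type) (s : seq T) (P : pred T) :
  \sum_(t <- s) (if P t then 1 else 0) = (count P s)%:R :> R.
Proof.
elim: s => [|t s IH]; first by rewrite big_nil.
by rewrite big_cons IH /= natrD; case: (P t); rewrite ?add0r.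
Qed.

Definition of_triple (A : finType) (t : A * A * A) : assignment Var A :=
  [ffun i : Var => if val i == 0%N then t.1.1 else if val i == 1%N then t.1.2 else t.2].
Definition to_triple (A : finType) (s : assignment Var A) : A * A * A := (s vx, s vy, s vz).

Lemma of_tripleK (A : finType) : cancel (@of_triple A) (@to_triple A).
Proof. by case=> [[a b] c]; rewrite /to_triple /vx /vy /vz !ffunE /= !inordK. Qed.

Lemma to_tripleK (A : finType) : cancel (@to_triple A) (@of_triple A).
Proof.
move=> s; apply/ffunP => -[[|[|[|k]]] lt_k3] //; rewrite ffunE /=; congr (s _);
  by apply/val_inj; rewrite /= inordK.
Qed.

Lemma of_triple_x (A : finType) (t : A * A * A) : of_triple t vx = t.1.1.
Proof. by rewrite ffunE /vx /= inordK. Qed.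
Lemma of_triple_y (A : finType) (t : A * A * A) : of_triple t vy = t.1.2.
Proof. by rewrite ffunE /vy /= inordK. Qed.
Lemma of_triple_z (A : finType) (t : A * A * A) : of_triple t vz = t.2.
Proof. by rewrite ffunE /vz /= inordK. Qed.

(* Literal elements of Dom in a form on which comparisons compute. *)
Lemma inord10 (m : nat) (lt_m10 : (m < 10)%N) : inord m = Ordinal lt_m10 :> Dom.
Proof. by apply: val_inj; rewrite /= inordK. Qed.

Lemma support_uniq : uniq Defs.support.
Proof. by rewrite /Defs.support /a_ /b_ /c_ !inord10. Qed.

Lemma column_x :
  perm_eq [seq of_triple t vx | t <- Defs.support] (flatten (nseq 2 [:: a_ 0; a_ 1; a_ 2; a_ 3])).
Proof. by rewrite (eq_map (@of_triple_x _)) /Defs.support /a_ /b_ /c_ !inord10. Qed.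

Lemma column_y :
  perm_eq [seq of_triple t vy | t <- Defs.support] (flatten (nseq 2 [:: b_ 0; b_ 1; b_ 2; b_ 3])).
Proof. by rewrite (eq_map (@of_triple_y _)) /Defs.support /a_ /b_ /c_ !inord10. Qed.

Lemma column_z :
  perm_eq [seq of_triple t vz | t <- Defs.support] (flatten (nseq 4 [:: c_ 0; c_ 1])).
Proof. by rewrite (eq_map (@of_triple_z _)) /Defs.support /a_ /b_ /c_ !inord10. Qed.

Lemma count_x_a0 : count (fun t => of_triple t vx == a_ 0) Defs.support = 2%N.
Proof.
rewrite (eq_count (a2 := fun t => t.1.1 == a_ 0)) => [|t]; last by rewrite of_triple_x.
by rewrite /Defs.support /a_ /b_ /c_ !inord10.
Qed.

Lemma count_yz_b0c0 :
  count (fun t => (of_triple t vy == b_ 0) && (of_triple t vz == c_ 0)) Defs.support = 1%N.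
Proof.
rewrite (eq_count (a2 := fun t => (t.1.2 == b_ 0) && (t.2 == c_ 0))) => [|t].
  by rewrite /Defs.support /a_ /b_ /c_ !inord10.
by rewrite of_triple_y of_triple_z.
Qed.

Lemma sum_Xteam (f : assignment Var Dom -> 'Z_4) :
  \sum_s Xteam s * f s = \sum_(t <- Defs.support) f (of_triple t).
Proof.
rewrite (reindex (@of_triple Dom)); last first.
  by exists (@to_triple Dom) => s _; [exact: of_tripleK | exact: to_tripleK].
rewrite (big_uniq _ support_uniq) [RHS]big_mkcond; apply: eq_bigr => t _.
by rewrite /Xteam -[(_, _, _)]/(to_triple _) of_tripleK; case: ifP; rewrite ?mul1r ?mul0r.
Qed.

(* Xteam has total weight 8, which is 0 in Z_4. *)
Lemma theta0_Xteam : theta0 Xteam = 0.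
Proof.
rewrite /theta0; under eq_bigr do rewrite -[Xteam _]mulr1.
rewrite sum_Xteam.
have -> : \sum_(t <- Defs.support) (1 : 'Z_4) = (count predT Defs.support)%:R.
  exact: (@sum_indicator _ _ Defs.support predT).
by apply/Zp_nat_eq0; rewrite ?count_predT.
Qed.

Lemma theta1_Xteam (n : nat) (xs : 'I_n -> Var) (v : {ffun 'I_n -> Dom}) :
  theta1 Xteam xs v =
  (count (fun t => [forall i, of_triple t (xs i) == v i]) Defs.support)%:R.
Proof.
rewrite /theta1 sum_Xteam -sum_indicator; apply: eq_bigr => t _.
by rewrite /eqlit prod_indicator.
Qed.

Lemma count_repeat (T : Type) (P : pred T) (k : nat) (l : seq T) :
  count P (flatten (nseq k l)) = (k * count P l)%N.
Proof. by elim: k => [|k IH] //=; rewrite count_cat IH mulSn. Qed.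

Lemma column_count_dvd (T U : eqType) (s : seq T) (f : T -> U) (k : nat) (l : seq U) :
  perm_eq [seq f t | t <- s] (flatten (nseq k l)) ->
  forall u, (k %| count (fun t => f t == u) s)%N.
Proof.
move=> column u; rewrite -[count _ s](count_map f (pred1 u)) (permP column).
by rewrite count_repeat dvdn_mulr.
Qed.

Lemma forall_ord1 (P : pred 'I_1) : [forall i, P i] = P ord0.
Proof. by apply/forallP/idP => [|P0 i]; [apply | rewrite ord1]. Qed.

Lemma forall_ord2 (P : pred 'I_2) : [forall i, P i] = P ord0 && P ord_max.
Proof.
apply/forallP/andP => [allP | [P0 P1] -[[|[|k]] lt_k2] //]; first by split; apply: allP.
- by rewrite (_ : Ordinal lt_k2 = ord0) //; apply: val_inj.
- by rewrite (_ : Ordinal lt_k2 = ord_max) //; apply: val_inj.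
Qed.

Lemma theta1_tup1 (u : Var) (v : {ffun 'I_1 -> Dom}) :
  theta1 Xteam (tup1 u) v =
  (count (fun t => of_triple t u == v ord0) Defs.support)%:R.
Proof. by rewrite theta1_Xteam; congr _%:R; apply: eq_count => t; rewrite forall_ord1. Qed.

Lemma theta1_tup2 (u w : Var) (v : {ffun 'I_2 -> Dom}) :
  theta1 Xteam (tup2 u w) v =
  (count (fun t => (of_triple t u == v ord0) && (of_triple t w == v ord_max))
         Defs.support)%:R.
Proof. by rewrite theta1_Xteam; congr _%:R; apply: eq_count => t; rewrite forall_ord2. Qed.

Lemma Zp_mul_nat_eq0 (p m n : nat) : (1 < p)%N -> (p %| m * n)%N ->
  m%:R * n%:R = 0 :> 'Z_p.
Proof. by move=> p_gt1 dvd_p_mn; rewrite -natrM; apply/Zp_nat_eq0. Qed.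

(* x ⊥ y: both marginal counts are even. *)
Lemma indep_x_y : satisfies_indep Xteam (tup1 vx) (tup1 vy).
Proof.
apply/(satisfies_indep_null _ _ theta0_Xteam) => v w.
rewrite !theta1_tup1; apply: Zp_mul_nat_eq0 => //.
have even_x := column_count_dvd column_x (v ord0).
have even_y := column_count_dvd column_y (w ord0).
exact: dvdn_mul even_x even_y.
Qed.

(* xy ⊥ z: every z-marginal count is a multiple of 4. *)
Lemma indep_xy_z : satisfies_indep Xteam (tup2 vx vy) (tup1 vz).
Proof.
apply/(satisfies_indep_null _ _ theta0_Xteam) => v w.
rewrite theta1_tup2 theta1_tup1; apply: Zp_mul_nat_eq0 => //.
exact/dvdn_mull/(column_count_dvd column_z).
Qed.

(* x ⊥ yz fails at v = (a_0), w = (b_0, c_0): 2 * 1 <> 0 in Z_4. *)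
Lemma not_indep_x_yz : ~ satisfies_indep Xteam (tup1 vx) (tup2 vy vz).
Proof.
pose v : {ffun 'I_1 -> Dom} := [ffun _ => a_ 0].
pose w : {ffun 'I_2 -> Dom} := [ffun i => if val i == 0%N then b_ 0 else c_ 0].
have v0 : v ord0 = a_ 0 by rewrite ffunE.
have w0 : w ord0 = b_ 0 by rewrite ffunE.
have w1 : w ord_max = c_ 0 by rewrite ffunE.
move/(satisfies_indep_null _ _ theta0_Xteam)/(_ v w).
rewrite theta1_tup1 theta1_tup2 v0 w0 w1 count_x_a0 count_yz_b0c0 -natrM.
by move/(@Zp_nat_eq0 4 _ isT).
Qed.

Theorem mainTheorem7 :
  [/\ satisfies_indep Xteam (tup1 vx) (tup1 vy),
      satisfies_indep Xteam (tup2 vx vy) (tup1 vz),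
      ~ satisfies_indep Xteam (tup1 vx) (tup2 vy vz)
    & ~ (forall X : team 'Z_4 Var Dom,
           satisfies_indep X (tup1 vx) (tup1 vy) ->
           satisfies_indep X (tup2 vx vy) (tup1 vz) ->
           satisfies_indep X (tup1 vx) (tup2 vy vz))].
Proof.
split; [exact: indep_x_y | exact: indep_xy_z | exact: not_indep_x_yz |].
by move=> mixing_rule; apply/not_indep_x_yz/mixing_rule; [exact: indep_x_y | exact: indep_xy_z].
Qed.
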